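(* Under the same setting as Lemma 2.8 ($c\ge0$, $d\in\{0,1,2,\dots\}$, $\lambda>0$, $q=e^{-\lambda/N}$, $\mathsf{s}=e^{-\lambda}$, fixed integers $p\ge1$, $0\le i\le p$), as $N\to\infty$, $$\sum_{j=0}^{N-1}f_i^{(c,d)}(j)=\Big(\frac{N}{\lambda}\Big)^{p+1}\frac{1}{i!(p-i)!}\Big(\mathcal{B}_{i,0}+\mathcal{B}_{i,1}\frac{\lambda}{N}+O(N^{-2})\Big),$$ where $\mathcal{B}_{i,0}=\lambda\mathcal{A}_{i,0}$ and $\mathcal{B}_{i,1}=\lambda\big(\mathcal{A}^{(1)}_{i,1}+\mathcal{A}^{(2)}_{i,1}+\mathcal{A}^{(3)}_{i,1}\big)-\frac12(1-\mathsf{s}^{c+1})^i(1-\mathsf{s})^{p-i}\mathsf{s}^{p+c(p-i)}+\frac12(1-\mathsf{s}^c)^p\delta_{i,p}$.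
   Context: For real $x$ and integer $m\ge0$ define $\begin{bmatrix} x\\ m\end{bmatrix}_q=\prod_{k=1}^{m}\frac{1-q^{x-m+k}}{1-q^{k}}$. For real $y\ge0$, $f_i^{(c,d)}(y)=q^{(cN+d)(p-i)+py}\begin{bmatrix} cN+d+y\\ i\end{bmatrix}_q\begin{bmatrix} p-i+y\\ p-i\end{bmatrix}_q$. The constants are $\mathcal{A}_{i,0}=\mathsf{s}^{c(p-i)}\int_0^1\mathsf{s}^{pt}(1-\mathsf{s}^t)^{p-i}(1-\mathsf{s}^{c+t})^i\,dt$, $\mathcal{A}^{(1)}_{i,1}=\mathsf{s}^{c(p-i+1)}\frac{i(2d-i+1)}{2}\int_0^1\mathsf{s}^{(p+1)t}(1-\mathsf{s}^t)^{p-i}(1-\mathsf{s}^{c+t})^{i-1}\,dt$, $\mathcal{A}^{(2)}_{i,1}=\mathsf{s}^{c(p-i)}\frac{(p-i)(p-i+1)}{2}\int_0^1\mathsf{s}^{(p+1)t}(1-\mathsf{s}^t)^{p-i-1}(1-\mathsf{s}^{c+t})^{i}\,dt$, $\mathcal{A}^{(3)}_{i,1}=\frac{4di+2i^2+p-4dp-2ip+p^2}{4}\mathcal{A}_{i,0}$. $\delta$ is the Kronecker delta. *)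

From Stdlib Require Import Reals Lra.
From Coquelicot Require Import Coquelicot.
Open Scope R_scope.

Definition rpow (a x : R) : R := Rpower a x.

(* prodR n f = f 1 * f 2 * ... * f n ; sumR n f = f 0 + ... + f (n-1) *)
Fixpoint prodR (n : nat) (f : nat -> R) : R :=
  match n with O => 1 | S n' => prodR n' f * f (S n') end.
Fixpoint sumR (n : nat) (f : nat -> R) : R :=
  match n with O => 0 | S n' => sumR n' f + f n' end.

Definition qbinom (q x : R) (m : nat) : R :=
  prodR m (fun k => (1 - rpow q (x - INR m + INR k)) / (1 - rpow q (INR k))).

Definition fcd (lam c : R) (d p i N : nat) (y : R) : R :=
  let q := exp (- lam / INR N) in
  let cNd := c * INR N + INR d in
  rpow q (cNd * INR (p - i) + INR p * y)
  * qbinom q (cNd + y) i * qbinom q (INR (p - i) + y) (p - i).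

Definition A_i0 (lam c : R) (p i : nat) : R :=
  let s := exp (- lam) in
  rpow s (c * INR (p - i)) *
  RInt (fun t => rpow s (INR p * t) * (1 - rpow s t) ^ (p - i)
                 * (1 - rpow s (c + t)) ^ i) 0 1.

Definition A1_i1 (lam c : R) (d p i : nat) : R :=
  let s := exp (- lam) in
  rpow s (c * (INR p - INR i + 1)) * (INR i * (2 * INR d - INR i + 1) / 2) *
  RInt (fun t => rpow s ((INR p + 1) * t) * (1 - rpow s t) ^ (p - i)
                 * (1 - rpow s (c + t)) ^ (i - 1)) 0 1.

(* when i = p the coefficient (p-i)(p-i+1)/2 vanishes; the truncated
   exponent (p-i-1)%nat is then irrelevant *)
Definition A2_i1 (lam c : R) (p i : nat) : R :=
  let s := exp (- lam) in
  rpow s (c * INR (p - i)) * ((INR p - INR i) * (INR p - INR i + 1) / 2) *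
  RInt (fun t => rpow s ((INR p + 1) * t) * (1 - rpow s t) ^ (p - i - 1)
                 * (1 - rpow s (c + t)) ^ i) 0 1.

Definition A3_i1 (lam c : R) (d p i : nat) : R :=
  (4 * INR d * INR i + 2 * INR i ^ 2 + INR p - 4 * INR d * INR p
   - 2 * INR i * INR p + INR p ^ 2) / 4 * A_i0 lam c p i.

Definition kdelta (a b : nat) : R := if Nat.eqb a b then 1 else 0.

Definition B_i0 (lam c : R) (p i : nat) : R := lam * A_i0 lam c p i.

Definition B_i1 (lam c : R) (d p i : nat) : R :=
  let s := exp (- lam) in
  lam * (A1_i1 lam c d p i + A2_i1 lam c p i + A3_i1 lam c d p i)
  - / 2 * (1 - rpow s (c + 1)) ^ i * (1 - s) ^ (p - i)
        * rpow s (INR p + c * INR (p - i))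
  + / 2 * (1 - rpow s c) ^ p * kdelta i p.

(* With [h = lam / N], [q = e^{-h}] and [u = e^{-h j}], the term [fcd (j)] is a fixed
   exponential polynomial [sum_m c_m u^(a_m) e^{-h b_m}] (all [a_m >= 1]) divided by
   [(q;q)_i (q;q)_(p-i)].  Summing over [j < N] turns [u^a] into the geometric sum
   [(1 - e^{-lam a}) / (1 - e^{-h a})], where [h / (1 - e^{-h a}) = 1/a + h/2 + O(h^2)], and
   [(q;q)_n = n! h^n (1 - n (n+1) h / 4 + O(h^2))].  So the normalised sum is an explicit
   function of [h] with a first-order expansion at [0+].  Because
   [int_0^1 e^{-lam a t} dt = (1 - e^{-lam a}) / (lam a)], its constant term is [lam] times
   the integral of the numerator at [h = 0] along [u = e^{-lam t}]; in the linear term the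
   [- b_m / a_m] parts integrate the [h]-derivative of the numerator (giving [A^(1)], [A^(2)]
   and part of [A^(3)]), and the [1/2] parts give its values at [u = 1] and [u = e^{-lam}]. *)

From Stdlib Require Import Reals Arith Lra Lia List.
From Coquelicot Require Import Coquelicot.
Open Scope R_scope.

Lemma sumR_ext n f g : (forall j, f j = g j) -> sumR n f = sumR n g.
Proof. intros E. induction n; simpl; auto. rewrite IHn, E. auto. Qed.

Lemma sumR_plus n f g : sumR n (fun j => f j + g j) = sumR n f + sumR n g.
Proof. induction n; simpl; [ring|]. rewrite IHn. ring. Qed.

Lemma sumR_scal n k f : sumR n (fun j => k * f j) = k * sumR n f.
Proof. induction n; simpl; [ring|]. rewrite IHn. ring. Qed.

Lemma sumR_const0 n : sumR n (fun _ => 0) = 0.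
Proof. induction n; simpl; [ring|]. rewrite IHn. ring. Qed.

Lemma sumR_geom n r : sumR n (fun j => r ^ j) * (1 - r) = 1 - r ^ n.
Proof. induction n; simpl; [ring|]. rewrite Rmult_plus_distr_r, IHn. ring. Qed.

Lemma sumR_affine n e f :
  sumR n (fun k => e + f * INR (S k)) = INR n * e + f * (INR n * (INR n + 1) / 2).
Proof. induction n; [simpl; field|]. cbn [sumR]. rewrite IHn, !S_INR. field. Qed.

Lemma prodR_ext n f g : (forall k, f k = g k) -> prodR n f = prodR n g.
Proof. intros E. induction n; simpl; auto. rewrite IHn, E. auto. Qed.

Lemma prodR_const n w : prodR n (fun _ => w) = w ^ n.
Proof. induction n; simpl; auto. rewrite IHn. ring. Qed.

Lemma prodR_div n f g : prodR n (fun k => f k / g k) = prodR n f / prodR n g.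
Proof. induction n; simpl; [field|]. rewrite IHn. unfold Rdiv. rewrite Rinv_mult. ring. Qed.

Lemma exp_taylor1_bound y : Rabs y <= / 2 -> Rabs (exp y - 1 - y) <= 2 * y ^ 2.
Proof.
  intros Hy.
  assert (Hy2 : - / 2 <= y <= / 2) by (apply Rabs_le_between in Hy; lra).
  pose proof (exp_ineq1_le y). pose proof (exp_ineq1_le (- y)).
  assert (Hinv : exp y * exp (- y) = 1) by (rewrite <- exp_plus, Rplus_opp_r; apply exp_0).
  pose proof (exp_pos y).
  rewrite Rabs_right by lra.
  assert (exp y * (1 - y) <= 1) by nra.
  nra.
Qed.

Lemma one_sub_exp_opp_pos x : 0 < x -> 0 < 1 - exp (- x).
Proof.
  intros Hx. assert (exp (- x) < 1) by (rewrite <- exp_0; apply exp_increasing; lra). lra.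
Qed.

Lemma pow_exp x n : exp x ^ n = exp (INR n * x).
Proof.
  induction n; [simpl; rewrite Rmult_0_l, exp_0; auto|].
  rewrite <- tech_pow_Rmult, IHn, <- exp_plus, S_INR. f_equal. ring.
Qed.

Lemma exp_opp_mul_succ_bounds x : 0 <= x -> 0 <= 1 - exp (- x) * (1 + x) <= x ^ 2.
Proof.
  intros Hx. destruct (Req_dec x 0) as [->|Hx0].
  { rewrite Ropp_0, exp_0. lra. }
  destruct (MVT_cor2 (fun t => 1 - exp (- t) * (1 + t)) (fun t => t * exp (- t)) 0 x)
    as [z [Hz Hzx]]; [lra| |].
  { intros z _. apply is_derive_Reals. auto_derive; auto. ring. }
  rewrite Ropp_0, exp_0 in Hz.
  assert (0 < exp (- z)) by apply exp_pos.
  assert (exp (- z) <= 1) by (rewrite <- exp_0; apply Rlt_le, exp_increasing; lra).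
  assert (0 <= z * exp (- z) <= x) by (split; nra).
  split; nra.
Qed.

Lemma exp_opp_mul_half_succ_bounds x :
  0 <= x -> 0 <= x / 2 - 1 + (1 + x / 2) * exp (- x) <= x ^ 3 / 2.
Proof.
  intros Hx. destruct (Req_dec x 0) as [->|Hx0].
  { rewrite Ropp_0, exp_0. lra. }
  destruct (MVT_cor2 (fun t => t / 2 - 1 + (1 + t / 2) * exp (- t))
              (fun t => (1 - exp (- t) * (1 + t)) / 2) 0 x) as [z [Hz Hzx]]; [lra| |].
  { intros z _. apply is_derive_Reals. auto_derive; auto. field. }
  rewrite Ropp_0, exp_0 in Hz.
  pose proof (exp_opp_mul_succ_bounds z ltac:(lra)).
  assert (0 <= (1 - exp (- z) * (1 + z)) / 2 <= x ^ 2 / 2) by (split; nra).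
  split; nra.
Qed.

(* [h * sum_{j >= 0} e^{-h a j}]; the finite geometric sums in [j] are expressed through it. *)
Definition scaled_geom (a h : R) : R := h / (1 - exp (- (h * a))).

Lemma scaled_geom_bound a h : 0 < a -> 0 < h -> h * a <= 1 ->
  Rabs (scaled_geom a h - / a - h / 2) <= a * h ^ 2.
Proof.
  intros Ha Hh Hha. unfold scaled_geom. set (x := h * a) in *.
  assert (Hx : 0 < x) by (unfold x; nra).
  pose proof (exp_opp_mul_half_succ_bounds x ltac:(lra)) as Hrem.
  pose proof (exp_ineq1_le x).
  assert (Hinv : exp x * exp (- x) = 1) by (rewrite <- exp_plus, Rplus_opp_r; apply exp_0).
  set (E := exp (- x)) in *.
  assert (0 < E) by apply exp_pos.
  assert (E * (1 + x) <= 1) by nra.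
  assert (x / 2 <= 1 - E) by nra.
  replace (h / (1 - E) - / a - h / 2) with ((x / 2 - 1 + (1 + x / 2) * E) / (a * (1 - E)))
    by (unfold x; field; split; lra).
  rewrite Rabs_right by (apply Rle_ge, Rdiv_le_0_compat; nra).
  apply Rle_trans with ((x ^ 3 / 2) / (a * (x / 2))).
  - unfold Rdiv. apply Rmult_le_compat; try lra.
    + apply Rlt_le, Rinv_0_lt_compat; nra.
    + apply Rinv_le_contravar; nra.
  - replace (a * h ^ 2) with (x ^ 2 / a) by (unfold x; field; lra).
    right. field. lra.
Qed.

(** * First-order expansions at [0+] *)

Definition expands_to (F : R -> R) (a0 a1 : R) : Prop :=
  exists C delta, 0 < delta /\
    forall h, 0 < h <= delta -> Rabs (F h - a0 - a1 * h) <= C * h ^ 2.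

Lemma expands_to_ext F G a0 a1 :
  (forall h, 0 < h -> F h = G h) -> expands_to F a0 a1 -> expands_to G a0 a1.
Proof.
  intros FG [C [delta [Hdelta HF]]]. exists C, delta. split; auto.
  intros h Hh. rewrite <- FG by lra. auto.
Qed.

Lemma expands_to_eq F a0 a1 b0 b1 :
  expands_to F a0 a1 -> a0 = b0 -> a1 = b1 -> expands_to F b0 b1.
Proof. intros H -> ->. exact H. Qed.

Lemma expands_to_const k : expands_to (fun _ => k) k 0.
Proof.
  exists 0, 1. split; [lra|]. intros h Hh.
  replace (k - k - 0 * h) with 0 by ring. rewrite Rabs_R0. lra.
Qed.

Lemma expands_to_plus F G a0 a1 b0 b1 : expands_to F a0 a1 -> expands_to G b0 b1 ->
  expands_to (fun h => F h + G h) (a0 + b0) (a1 + b1).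
Proof.
  intros [C1 [d1 [Hd1 HF]]] [C2 [d2 [Hd2 HG]]].
  exists (C1 + C2), (Rmin d1 d2). split; [apply Rmin_pos; auto|].
  intros h Hh. pose proof (Rmin_l d1 d2). pose proof (Rmin_r d1 d2).
  specialize (HF h ltac:(lra)). specialize (HG h ltac:(lra)).
  replace (F h + G h - (a0 + b0) - (a1 + b1) * h)
    with ((F h - a0 - a1 * h) + (G h - b0 - b1 * h)) by ring.
  eapply Rle_trans; [apply Rabs_triang|]. lra.
Qed.

Lemma Rabs_affine_le a0 a1 h : 0 <= h <= 1 -> Rabs (a0 + a1 * h) <= Rabs a0 + Rabs a1.
Proof.
  intros Hh. eapply Rle_trans; [apply Rabs_triang|].
  rewrite Rabs_mult, (Rabs_right h) by lra. pose proof (Rabs_pos a1). nra.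
Qed.

Lemma expands_to_mult F G a0 a1 b0 b1 : expands_to F a0 a1 -> expands_to G b0 b1 ->
  expands_to (fun h => F h * G h) (a0 * b0) (a1 * b0 + a0 * b1).
Proof.
  intros [C1 [d1 [Hd1 HF]]] [C2 [d2 [Hd2 HG]]].
  exists (Rabs (a1 * b1) + (Rabs a0 + Rabs a1) * C2 + C1 * (Rabs b0 + Rabs b1) + C1 * C2),
         (Rmin 1 (Rmin d1 d2)).
  split; [apply Rmin_pos; [lra|apply Rmin_pos; auto]|].
  intros h Hh. pose proof (Rmin_l 1 (Rmin d1 d2)). pose proof (Rmin_r 1 (Rmin d1 d2)).
  pose proof (Rmin_l d1 d2). pose proof (Rmin_r d1 d2).
  specialize (HF h ltac:(lra)). specialize (HG h ltac:(lra)).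
  set (r1 := F h - a0 - a1 * h) in *. set (r2 := G h - b0 - b1 * h) in *.
  pose proof (Rabs_pos r1). pose proof (Rabs_pos r2).
  assert (Hh2 : 0 < h ^ 2 <= 1) by (split; nra).
  assert (0 <= C1) by nra. assert (0 <= C2) by nra.
  pose proof (Rabs_affine_le a0 a1 h ltac:(lra)).
  pose proof (Rabs_affine_le b0 b1 h ltac:(lra)).
  replace (F h * G h - a0 * b0 - (a1 * b0 + a0 * b1) * h) with
    (a1 * b1 * h ^ 2 + (a0 + a1 * h) * r2 + r1 * (b0 + b1 * h) + r1 * r2)
    by (unfold r1, r2; ring).
  assert (Rabs (a1 * b1 * h ^ 2) = Rabs (a1 * b1) * h ^ 2)
    by (rewrite Rabs_mult, (Rabs_right (h ^ 2)); lra).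
  assert (Rabs ((a0 + a1 * h) * r2) <= (Rabs a0 + Rabs a1) * C2 * h ^ 2).
  { rewrite Rabs_mult. pose proof (Rabs_pos (a0 + a1 * h)). nra. }
  assert (Rabs (r1 * (b0 + b1 * h)) <= C1 * (Rabs b0 + Rabs b1) * h ^ 2).
  { rewrite Rabs_mult. pose proof (Rabs_pos (b0 + b1 * h)). nra. }
  assert (Rabs (r1 * r2) <= C1 * C2 * h ^ 2).
  { rewrite Rabs_mult.
    assert (Rabs r1 * Rabs r2 <= C1 * h ^ 2 * (C2 * h ^ 2)) by (apply Rmult_le_compat; auto).
    assert (0 <= C1 * C2 * h ^ 2) by (apply Rmult_le_pos; nra).
    nra. }
  pose proof (Rabs_triang (a1 * b1 * h ^ 2 + (a0 + a1 * h) * r2 + r1 * (b0 + b1 * h)) (r1 * r2)).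
  pose proof (Rabs_triang (a1 * b1 * h ^ 2 + (a0 + a1 * h) * r2) (r1 * (b0 + b1 * h))).
  pose proof (Rabs_triang (a1 * b1 * h ^ 2) ((a0 + a1 * h) * r2)).
  lra.
Qed.

Lemma expands_to_exp b : expands_to (fun h => exp (- h * b)) 1 (- b).
Proof.
  pose proof (Rabs_pos b).
  set (delta := / (2 * (Rabs b + 1))).
  assert (Hdelta : delta * (Rabs b + 1) = / 2) by (unfold delta; field; lra).
  exists (2 * b ^ 2), delta. split; [unfold delta; apply Rinv_0_lt_compat; lra|].
  intros h Hh.
  assert (h * Rabs b <= / 2) by nra.
  assert (Hy : Rabs (- h * b) <= / 2)
    by (rewrite Rabs_mult, Rabs_Ropp, Rabs_right by lra; lra).
  replace (exp (- h * b) - 1 - - b * h) with (exp (- h * b) - 1 - (- h * b)) by ring.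
  eapply Rle_trans; [apply (exp_taylor1_bound _ Hy)|].
  assert (b ^ 2 <= Rabs b ^ 2) by (rewrite pow2_abs; lra).
  replace ((- h * b) ^ 2) with (h ^ 2 * b ^ 2) by ring.
  nra.
Qed.

Lemma expands_to_scaled_geom a : 0 < a -> expands_to (scaled_geom a) (/ a) (/ 2).
Proof.
  intros Ha. exists a, (/ a). split; [apply Rinv_0_lt_compat; auto|].
  intros h Hh.
  replace (scaled_geom a h - / a - / 2 * h) with (scaled_geom a h - / a - h / 2)
    by (unfold Rdiv; ring).
  apply scaled_geom_bound; try lra.
  replace 1 with (/ a * a) by (field; lra). apply Rmult_le_compat_r; lra.
Qed.

Lemma expands_to_prodR (F : nat -> R -> R) (m : nat -> R) n :
  (forall k, (1 <= k)%nat -> expands_to (F k) 1 (m k)) ->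
  expands_to (fun h => prodR n (fun k => F k h)) 1 (sumR n (fun k => m (S k))).
Proof.
  intros HF. induction n as [|n IH].
  - exact (expands_to_const 1).
  - eapply expands_to_eq;
      [apply expands_to_mult; [apply IH|apply HF; lia]|ring|cbn [sumR]; ring].
Qed.

Lemma expands_to_at_inv_nat F a0 a1 lam : 0 < lam -> expands_to F a0 a1 ->
  exists C N0, (1 <= N0)%nat /\ forall N, (N0 <= N)%nat ->
    Rabs (F (lam / INR N) - a0 - a1 * (lam / INR N)) <= C / INR N ^ 2.
Proof.
  intros Hlam [C [delta [Hdelta HF]]].
  destruct (archimed_cor1 (delta / lam)) as [N0 [HN0 HN0pos]].
  { apply Rdiv_lt_0_compat; auto. }
  exists (C * lam ^ 2), N0. split; [lia|]. intros N HN.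
  assert (HN0r : 0 < INR N0) by (apply lt_0_INR; lia).
  assert (HNN0 : INR N0 <= INR N) by (apply le_INR; auto).
  assert (Hh : 0 < lam / INR N) by (apply Rdiv_lt_0_compat; lra).
  assert (lam / INR N <= delta).
  { apply Rle_trans with (lam / INR N0).
    - unfold Rdiv. apply Rmult_le_compat_l; [lra|]. apply Rinv_le_contravar; auto.
    - apply Rlt_le, Rmult_lt_reg_r with (/ lam); [apply Rinv_0_lt_compat; auto|].
      replace (lam / INR N0 * / lam) with (/ INR N0) by (field; lra). exact HN0. }
  replace (C * lam ^ 2 / INR N ^ 2) with (C * (lam / INR N) ^ 2) by (field; lra).
  apply HF. lra.
Qed.

(** * Exponential polynomials *)

(* The monomial [c u^a e^{-h b}]; [ep_dh] below is the derivative in [h]. *)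
Record emono := EMono { mcoef : R; mdeg : nat; mrate : R }.

Definition emono_eval (m : emono) (u h : R) : R := mcoef m * u ^ mdeg m * exp (- h * mrate m).

Definition ep_eval (l : list emono) (u h : R) : R :=
  fold_right (fun m acc => emono_eval m u h + acc) 0 l.

Definition emono_mul (m1 m2 : emono) : emono :=
  EMono (mcoef m1 * mcoef m2) (mdeg m1 + mdeg m2) (mrate m1 + mrate m2).

Definition ep_mul (l1 l2 : list emono) : list emono :=
  flat_map (fun m1 => map (emono_mul m1) l2) l1.

Definition emono_dh (m : emono) : emono := EMono (- mrate m * mcoef m) (mdeg m) (mrate m).

Definition ep_dh (l : list emono) : list emono := map emono_dh l.

Fixpoint ep_prod (n : nat) (F : nat -> list emono) : list emono :=
  match n with O => EMono 1 0 0 :: nil | S n' => ep_mul (ep_prod n' F) (F (S n')) end.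

Definition ep_deg_pos (l : list emono) : Prop := List.Forall (fun m => (1 <= mdeg m)%nat) l.

Lemma ep_eval_app l1 l2 u h : ep_eval (l1 ++ l2) u h = ep_eval l1 u h + ep_eval l2 u h.
Proof. induction l1; simpl; [ring|]. unfold ep_eval in *. simpl. rewrite IHl1. ring. Qed.

Lemma emono_eval_mul m1 m2 u h :
  emono_eval (emono_mul m1 m2) u h = emono_eval m1 u h * emono_eval m2 u h.
Proof.
  unfold emono_eval, emono_mul; simpl. rewrite pow_add.
  replace (- h * (mrate m1 + mrate m2)) with (- h * mrate m1 + - h * mrate m2) by ring.
  rewrite exp_plus. ring.
Qed.

Lemma ep_eval_map_mul m l u h :
  ep_eval (map (emono_mul m) l) u h = emono_eval m u h * ep_eval l u h.
Proof.
  induction l; simpl; [ring|]. unfold ep_eval in *; simpl.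
  rewrite IHl, emono_eval_mul. ring.
Qed.

Lemma ep_eval_mul l1 l2 u h : ep_eval (ep_mul l1 l2) u h = ep_eval l1 u h * ep_eval l2 u h.
Proof.
  induction l1; simpl; [unfold ep_eval; simpl; ring|].
  unfold ep_mul in *. simpl. rewrite ep_eval_app, ep_eval_map_mul, IHl1.
  unfold ep_eval; simpl. ring.
Qed.

Lemma ep_eval_prod n F u h : ep_eval (ep_prod n F) u h = prodR n (fun k => ep_eval (F k) u h).
Proof.
  induction n; simpl.
  - unfold ep_eval, emono_eval; simpl. rewrite Rmult_0_r, exp_0. ring.
  - rewrite ep_eval_mul, IHn. auto.
Qed.

Lemma ep_eval_dh l u h :
  ep_eval (ep_dh l) u h = fold_right (fun m acc => - mrate m * emono_eval m u h + acc) 0 l.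
Proof.
  induction l; simpl; auto. unfold ep_eval in *; simpl. rewrite IHl. unfold emono_eval. simpl. ring.
Qed.

Lemma ep_eval_dh_map_mul m l u h :
  ep_eval (ep_dh (map (emono_mul m) l)) u h =
  ep_eval (ep_dh (m :: nil)) u h * ep_eval l u h + emono_eval m u h * ep_eval (ep_dh l) u h.
Proof.
  rewrite !ep_eval_dh. induction l; simpl; [ring|].
  rewrite IHl, emono_eval_mul. simpl. ring.
Qed.

Lemma ep_eval_dh_mul l1 l2 u h :
  ep_eval (ep_dh (ep_mul l1 l2)) u h =
  ep_eval (ep_dh l1) u h * ep_eval l2 u h + ep_eval l1 u h * ep_eval (ep_dh l2) u h.
Proof.
  induction l1; simpl; [unfold ep_eval; simpl; ring|].
  unfold ep_mul, ep_dh in *. simpl. rewrite map_app, ep_eval_app, ep_eval_dh_map_mul, IHl1.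
  unfold ep_dh, ep_eval; simpl. ring.
Qed.

Lemma ep_eval_dh_prod_at0 n F u w z (m : nat -> R) :
  (forall k, ep_eval (F k) u 0 = w) -> (forall k, ep_eval (ep_dh (F k)) u 0 = m k * z) ->
  ep_eval (ep_dh (ep_prod n F)) u 0 = sumR n (fun k => m (S k)) * z * w ^ (n - 1).
Proof.
  intros HF HdF. induction n as [|n IH].
  - unfold ep_dh, ep_eval, emono_eval; simpl. ring.
  - cbn [ep_prod sumR]. rewrite ep_eval_dh_mul, IH, ep_eval_prod, HF, HdF.
    rewrite (prodR_ext n _ (fun _ => w)) by auto. rewrite prodR_const.
    destruct n as [|n]; [simpl; ring|].
    replace (S (S n) - 1)%nat with (S n) by lia. replace (S n - 1)%nat with n by lia.
    simpl. ring.
Qed.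

Lemma ep_deg_pos_mul l1 l2 : ep_deg_pos l1 -> ep_deg_pos (ep_mul l1 l2).
Proof.
  intros H. induction H as [|m l1 Hm _ IH]; simpl; [constructor|].
  apply List.Forall_app. split; auto.
  apply List.Forall_map, List.Forall_forall. intros x _. simpl. lia.
Qed.

Lemma ep_deg_pos_dh l : ep_deg_pos l -> ep_deg_pos (ep_dh l).
Proof. intros H. apply List.Forall_map. eapply List.Forall_impl; [|apply H]. auto. Qed.

(** * Summing an exponential polynomial along [u = e^{-h j}] *)

Lemma geom_sum_exp_pow lam h N a : 0 < h -> h * INR N = lam -> (1 <= a)%nat ->
  h * sumR N (fun j => exp (- h * INR j) ^ a) = (1 - exp (- lam * INR a)) * scaled_geom (INR a) h.
Proof.
  intros Hh HN Ha.
  assert (0 < INR a) by (apply lt_0_INR; lia).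
  rewrite (sumR_ext N _ (fun j => exp (- (h * INR a)) ^ j))
    by (intros j; rewrite !pow_exp; f_equal; ring).
  pose proof (sumR_geom N (exp (- (h * INR a)))) as Hgeom.
  pose proof (one_sub_exp_opp_pos (h * INR a) ltac:(nra)).
  rewrite pow_exp in Hgeom.
  replace (INR N * - (h * INR a)) with (- lam * INR a) in Hgeom by (rewrite <- HN; ring).
  unfold scaled_geom. rewrite <- Hgeom. field. lra.
Qed.

Definition ep_geom (lam : R) (l : list emono) (h : R) : R :=
  fold_right (fun m acc => mcoef m * exp (- h * mrate m) * (1 - exp (- lam * INR (mdeg m)))
                           * scaled_geom (INR (mdeg m)) h + acc) 0 l.

Lemma ep_sum_eval lam l h N : 0 < h -> h * INR N = lam -> ep_deg_pos l ->
  h * sumR N (fun j => ep_eval l (exp (- h * INR j)) h) = ep_geom lam l h.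
Proof.
  intros Hh HN Hl. induction Hl as [|m l Hm _ IH].
  - unfold ep_eval; simpl. rewrite sumR_const0. ring.
  - unfold ep_eval, ep_geom in *. simpl.
    rewrite sumR_plus, Rmult_plus_distr_l, IH. unfold emono_eval.
    rewrite (sumR_ext N _ (fun j => mcoef m * exp (- h * mrate m) * exp (- h * INR j) ^ mdeg m))
      by (intros; ring).
    rewrite sumR_scal, <- Rmult_assoc, (Rmult_comm h), Rmult_assoc.
    rewrite (geom_sum_exp_pow lam h N) by auto. ring.
Qed.

Definition ep_coef0 (lam : R) (l : list emono) : R :=
  fold_right (fun m acc => mcoef m * (1 - exp (- lam * INR (mdeg m))) / INR (mdeg m) + acc) 0 l.

Definition ep_coef1 (lam : R) (l : list emono) : R :=
  fold_right (fun m acc => mcoef m * (1 - exp (- lam * INR (mdeg m)))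
                           * (/ 2 - mrate m / INR (mdeg m)) + acc) 0 l.

Lemma expands_to_ep_geom lam l :
  ep_deg_pos l -> expands_to (ep_geom lam l) (ep_coef0 lam l) (ep_coef1 lam l).
Proof.
  intros Hl. induction Hl as [|m l Hm _ IH]; simpl.
  - exact (expands_to_const 0).
  - assert (Ha : 0 < INR (mdeg m)) by (apply lt_0_INR; lia).
    apply expands_to_plus with
      (F := fun h => mcoef m * exp (- h * mrate m) * (1 - exp (- lam * INR (mdeg m)))
                     * scaled_geom (INR (mdeg m)) h); auto.
    set (k := mcoef m * (1 - exp (- lam * INR (mdeg m)))).
    eapply expands_to_eq; [eapply expands_to_ext; [|apply expands_to_mult;
      [apply (expands_to_const k)|apply expands_to_mult;
        [apply (expands_to_exp (mrate m))| apply (expands_to_scaled_geom _ Ha)]]]| |].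
    + intros h _. simpl. unfold k. ring.
    + unfold k. field. lra.
    + unfold k. field. lra.
Qed.

(** * Integrals of exponential polynomials along [u = e^{-lam t}] *)

Lemma is_RInt_emono_eval lam m : 0 < lam -> (1 <= mdeg m)%nat ->
  is_RInt (fun t => emono_eval m (exp (- lam * t)) 0) 0 1
          (mcoef m * (1 - exp (- lam * INR (mdeg m))) / INR (mdeg m) / lam).
Proof.
  intros Hlam Hm. assert (Ha : 0 < INR (mdeg m)) by (apply lt_0_INR; lia).
  set (a := INR (mdeg m)) in *.
  set (F := fun t => - mcoef m / (lam * a) * exp (- (lam * a) * t)).
  replace (mcoef m * (1 - exp (- lam * a)) / a / lam) with (minus (F 1) (F 0)).
  2:{ unfold minus, plus, opp, F; simpl. rewrite Rmult_0_r, exp_0.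
      replace (- (lam * a) * 1) with (- lam * a) by ring. field. lra. }
  eapply is_RInt_ext; [|apply (is_RInt_derive F (fun t => mcoef m * exp (- (lam * a) * t)))].
  - intros x _. unfold emono_eval. rewrite pow_exp.
    replace (- 0 * mrate m) with 0 by ring. rewrite exp_0, Rmult_1_r. fold a.
    f_equal. f_equal. ring.
  - intros x _. unfold F. auto_derive; auto. field. lra.
  - intros x _. apply (ex_derive_continuous (fun t => mcoef m * exp (- (lam * a) * t))).
    auto_derive. auto.
Qed.

Lemma is_RInt_ep_eval lam l : 0 < lam -> ep_deg_pos l ->
  is_RInt (fun t => ep_eval l (exp (- lam * t)) 0) 0 1 (ep_coef0 lam l / lam).
Proof.
  intros Hlam Hl. induction Hl as [|m l Hm _ IH].
  - unfold ep_eval, ep_coef0; simpl.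
    replace (0 / lam) with (scal (1 - 0) 0) by (unfold scal; simpl; unfold mult; simpl; field; lra).
    exact (@is_RInt_const R_NormedModule 0 1 0).
  - assert (INR (mdeg m) <> 0) by (apply not_0_INR; lia).
    replace (ep_coef0 lam (m :: l) / lam) with
      (plus (mcoef m * (1 - exp (- lam * INR (mdeg m))) / INR (mdeg m) / lam)
            (ep_coef0 lam l / lam))
      by (unfold plus, ep_coef0; simpl; field; lra).
    exact (is_RInt_plus _ _ _ _ _ _ (is_RInt_emono_eval lam m Hlam Hm) IH).
Qed.

Lemma ep_coef1_dh lam l :
  ep_coef1 lam l = (ep_eval l 1 0 - ep_eval l (exp (- lam)) 0) / 2 + ep_coef0 lam (ep_dh l).
Proof.
  induction l as [|m l IH]; [unfold ep_coef1, ep_coef0, ep_eval; simpl; field|].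
  unfold ep_coef1, ep_coef0, ep_eval, emono_eval in *; simpl. rewrite IH, pow1, pow_exp.
  replace (- 0 * mrate m) with 0 by ring. rewrite exp_0.
  replace (INR (mdeg m) * - lam) with (- lam * INR (mdeg m)) by ring.
  unfold Rdiv. ring.
Qed.

Lemma rpow_exp_opp lam x : rpow (exp (- lam)) x = exp (- lam * x).
Proof. unfold rpow, Rpower. rewrite ln_exp. f_equal. ring. Qed.

Lemma ex_RInt_derivable (f : R -> R) : (forall t, ex_derive f t) -> ex_RInt f 0 1.
Proof.
  intros Hf. apply (ex_RInt_continuous (V := R_CompleteNormedModule)). intros z _.
  apply (ex_derive_continuous f). auto.
Qed.

Lemma is_RInt_scal_RInt (k : R) (f : R -> R) :
  (forall t, ex_derive f t) -> is_RInt (fun t => k * f t) 0 1 (k * RInt f 0 1).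
Proof.
  intros Hf. apply (is_RInt_scal (V := R_CompleteNormedModule)).
  apply RInt_correct, ex_RInt_derivable, Hf.
Qed.

Section FcdNumerator.

Variables (lam c : R) (d p i : nat).

(* With [h = lam / N], [q = e^{-h}], [u = q^y] and [q^(cN) = e^{-lam c}], the numerator of
   [fcd] (its q-binomials taken over the common denominators [(q;q)_i (q;q)_(p-i)]). *)
Definition fcd_num_lead : emono :=
  EMono (exp (- lam * (c * INR (p - i)))) p (INR d * INR (p - i)).
Definition fcd_num_factor1 (k : nat) : list emono :=
  EMono 1 0 0 :: EMono (- exp (- lam * c)) 1 (INR d - INR i + INR k) :: nil.
Definition fcd_num_factor2 (k : nat) : list emono :=
  EMono 1 0 0 :: EMono (-1) 1 (INR k) :: nil.
Definition fcd_num : list emono :=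
  ep_mul (ep_mul (fcd_num_lead :: nil) (ep_prod i fcd_num_factor1))
         (ep_prod (p - i) fcd_num_factor2).

Lemma fcd_num_deg_pos : (1 <= p)%nat -> ep_deg_pos fcd_num.
Proof.
  intros Hp. apply ep_deg_pos_mul, ep_deg_pos_mul. constructor; [simpl; lia|constructor].
Qed.

Lemma ep_eval_fcd_num u h : ep_eval fcd_num u h =
  exp (- lam * (c * INR (p - i))) * u ^ p * exp (- h * (INR d * INR (p - i)))
  * prodR i (fun k => 1 - exp (- lam * c) * u * exp (- h * (INR d - INR i + INR k)))
  * prodR (p - i) (fun k => 1 - u * exp (- h * INR k)).
Proof.
  unfold fcd_num. rewrite !ep_eval_mul, !ep_eval_prod.
  unfold ep_eval at 1, fcd_num_factor1, fcd_num_factor2, ep_eval, emono_eval; simpl.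
  rewrite (prodR_ext i _ (fun k => 1 - exp (- lam * c) * u * exp (- h * (INR d - INR i + INR k))))
    by (intros k; rewrite Rmult_0_r, exp_0; ring).
  rewrite (prodR_ext (p - i) _ (fun k => 1 - u * exp (- h * INR k)))
    by (intros k; rewrite Rmult_0_r, exp_0; ring).
  ring.
Qed.

Lemma ep_eval_fcd_num_factor1_at0 k u : ep_eval (fcd_num_factor1 k) u 0 = 1 - exp (- lam * c) * u.
Proof.
  unfold ep_eval, emono_eval, fcd_num_factor1; simpl.
  rewrite ?Ropp_0, ?Rmult_0_l, ?exp_0. ring.
Qed.

Lemma ep_eval_fcd_num_factor2_at0 k u : ep_eval (fcd_num_factor2 k) u 0 = 1 - u.
Proof.
  unfold ep_eval, emono_eval, fcd_num_factor2; simpl.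
  rewrite ?Ropp_0, ?Rmult_0_l, ?exp_0. ring.
Qed.

Lemma ep_eval_dh_fcd_num_factor1_at0 k u :
  ep_eval (ep_dh (fcd_num_factor1 k)) u 0 = (INR d - INR i + INR k) * (exp (- lam * c) * u).
Proof.
  unfold ep_dh, ep_eval, emono_eval, fcd_num_factor1; simpl.
  rewrite ?Ropp_0, ?Rmult_0_l, ?exp_0. ring.
Qed.

Lemma ep_eval_dh_fcd_num_factor2_at0 k u : ep_eval (ep_dh (fcd_num_factor2 k)) u 0 = INR k * u.
Proof.
  unfold ep_dh, ep_eval, emono_eval, fcd_num_factor2; simpl.
  rewrite ?Ropp_0, ?Rmult_0_l, ?exp_0. ring.
Qed.

Lemma ep_eval_fcd_num_at0 u : ep_eval fcd_num u 0 =
  exp (- lam * (c * INR (p - i))) * u ^ p * (1 - exp (- lam * c) * u) ^ i * (1 - u) ^ (p - i).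
Proof.
  unfold fcd_num. rewrite !ep_eval_mul, !ep_eval_prod.
  rewrite (prodR_ext i _ _ (fun k => ep_eval_fcd_num_factor1_at0 k u)).
  rewrite (prodR_ext (p - i) _ _ (fun k => ep_eval_fcd_num_factor2_at0 k u)), !prodR_const.
  unfold ep_eval, emono_eval, fcd_num_lead; simpl. rewrite Ropp_0, Rmult_0_l, exp_0. ring.
Qed.

Lemma ep_eval_fcd_num_dh_at0 u : (i <= p)%nat -> ep_eval (ep_dh fcd_num) u 0 =
  - (INR d * INR (p - i)) * ep_eval fcd_num u 0
  + exp (- lam * (c * (INR p - INR i + 1))) * (INR i * (2 * INR d - INR i + 1) / 2)
    * (u ^ p * u * (1 - u) ^ (p - i) * (1 - exp (- lam * c) * u) ^ (i - 1))
  + exp (- lam * (c * INR (p - i))) * ((INR p - INR i) * (INR p - INR i + 1) / 2)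
    * (u ^ p * u * (1 - u) ^ (p - i - 1) * (1 - exp (- lam * c) * u) ^ i).
Proof.
  intros Hip. rewrite ep_eval_fcd_num_at0. unfold fcd_num.
  rewrite !ep_eval_dh_mul, !ep_eval_mul, !ep_eval_prod.
  rewrite (ep_eval_dh_prod_at0 i _ u _ _ _ (fun k => ep_eval_fcd_num_factor1_at0 k u)
             (fun k => ep_eval_dh_fcd_num_factor1_at0 k u)).
  rewrite (ep_eval_dh_prod_at0 (p - i) _ u _ _ _ (fun k => ep_eval_fcd_num_factor2_at0 k u)
             (fun k => ep_eval_dh_fcd_num_factor2_at0 k u)).
  rewrite (prodR_ext i _ _ (fun k => ep_eval_fcd_num_factor1_at0 k u)).
  rewrite (prodR_ext (p - i) _ _ (fun k => ep_eval_fcd_num_factor2_at0 k u)), !prodR_const.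
  rewrite (sumR_ext i _ (fun k => (INR d - INR i) + 1 * INR (S k))) by (intros; ring).
  rewrite (sumR_ext (p - i) _ (fun k => 0 + 1 * INR (S k))) by (intros; ring).
  rewrite !sumR_affine.
  replace (exp (- lam * (c * (INR p - INR i + 1))))
    with (exp (- lam * (c * (INR p - INR i))) * exp (- lam * c))
    by (rewrite <- exp_plus; f_equal; ring).
  unfold ep_dh, ep_eval, emono_eval, fcd_num_lead; simpl.
  rewrite Ropp_0, !Rmult_0_l, exp_0, !(minus_INR p i Hip). field.
Qed.

Lemma ex_derive_A_integrand (a : R) (m n : nat) t :
  ex_derive (fun t => rpow (exp (- lam)) (a * t) * (1 - rpow (exp (- lam)) t) ^ m
                      * (1 - rpow (exp (- lam)) (c + t)) ^ n) t.
Proof. unfold rpow, Rpower. auto_derive. auto. Qed.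

Lemma is_RInt_fcd_num_at0 :
  is_RInt (fun t => ep_eval fcd_num (exp (- lam * t)) 0) 0 1 (A_i0 lam c p i).
Proof.
  unfold A_i0. cbv zeta.
  eapply is_RInt_ext; [|apply is_RInt_scal_RInt].
  - (* [is_RInt_ext] states the equality in the carrier of [R_NormedModule]. *)
    intros t _. match goal with |- ?x = ?y => change (@eq R x y) end.
    rewrite ep_eval_fcd_num_at0, !rpow_exp_opp.
    replace (exp (- lam * (INR p * t))) with (exp (- lam * t) ^ p)
      by (rewrite pow_exp; f_equal; ring).
    replace (exp (- lam * (c + t))) with (exp (- lam * c) * exp (- lam * t))
      by (rewrite <- exp_plus; f_equal; ring).
    ring.
  - intros t. apply ex_derive_A_integrand.
Qed.

Lemma is_RInt_fcd_num_dh_at0 : (i <= p)%nat ->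
  is_RInt (fun t => ep_eval (ep_dh fcd_num) (exp (- lam * t)) 0) 0 1
    (- (INR d * INR (p - i)) * A_i0 lam c p i + A1_i1 lam c d p i + A2_i1 lam c p i).
Proof.
  intros Hip. unfold A1_i1, A2_i1. cbv zeta.
  eapply is_RInt_ext; [|apply (is_RInt_plus _ _ _ _ _ _
    (is_RInt_plus _ _ _ _ _ _ (is_RInt_scal _ _ _ _ _ is_RInt_fcd_num_at0)
                              (is_RInt_scal_RInt _ _ (ex_derive_A_integrand _ _ _)))
    (is_RInt_scal_RInt _ _ (ex_derive_A_integrand _ _ _)))].
  - intros t _. match goal with |- ?x = ?y => change (@eq R x y) end.
    rewrite (ep_eval_fcd_num_dh_at0 _ Hip), !rpow_exp_opp.
    replace (exp (- lam * ((INR p + 1) * t))) with (exp (- lam * t) ^ p * exp (- lam * t))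
      by (rewrite pow_exp, <- exp_plus; f_equal; ring).
    replace (exp (- lam * (c + t))) with (exp (- lam * c) * exp (- lam * t))
      by (rewrite <- exp_plus; f_equal; ring).
    reflexivity.
Qed.

Lemma fcd_num_jump : (i <= p)%nat ->
  ep_eval fcd_num 1 0 - ep_eval fcd_num (exp (- lam)) 0 =
  (1 - rpow (exp (- lam)) c) ^ p * kdelta i p
  - (1 - rpow (exp (- lam)) (c + 1)) ^ i * (1 - exp (- lam)) ^ (p - i)
    * rpow (exp (- lam)) (INR p + c * INR (p - i)).
Proof.
  intros Hip. rewrite !ep_eval_fcd_num_at0, !rpow_exp_opp, pow1, pow_exp, !Rmult_1_r.
  replace (exp (- lam * (c + 1))) with (exp (- lam * c) * exp (- lam))
    by (rewrite <- exp_plus; f_equal; ring).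
  replace (exp (- lam * (INR p + c * INR (p - i))))
    with (exp (INR p * - lam) * exp (- lam * (c * INR (p - i))))
    by (rewrite <- exp_plus; f_equal; ring).
  unfold kdelta. destruct (Nat.eqb_spec i p) as [<-|Hne].
  - rewrite Nat.sub_diag, !pow_O. change (INR 0) with 0. rewrite !Rmult_0_r, exp_0. ring.
  - replace (p - i)%nat with (S (p - i - 1)) by lia. simpl. ring.
Qed.

End FcdNumerator.

Lemma B_i0_eq_coef0 lam c d p i : 0 < lam -> (1 <= p)%nat ->
  B_i0 lam c p i = ep_coef0 lam (fcd_num lam c d p i).
Proof.
  intros Hlam Hp. unfold B_i0.
  rewrite <- (is_RInt_unique _ _ _ _ (is_RInt_fcd_num_at0 lam c d p i)).
  rewrite (is_RInt_unique _ _ _ _ (is_RInt_ep_eval lam _ Hlam (fcd_num_deg_pos lam c d p i Hp))).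
  field. lra.
Qed.

Lemma B_i1_eq_coef lam c d p i : 0 < lam -> (1 <= p)%nat -> (i <= p)%nat ->
  B_i1 lam c d p i = ep_coef1 lam (fcd_num lam c d p i) + ep_coef0 lam (fcd_num lam c d p i)
    * (INR i * (INR i + 1) / 4 + INR (p - i) * (INR (p - i) + 1) / 4).
Proof.
  intros Hlam Hp Hip.
  pose proof (fcd_num_deg_pos lam c d p i Hp) as Hdeg.
  assert (Hdh : ep_coef0 lam (ep_dh (fcd_num lam c d p i)) =
    lam * (- (INR d * INR (p - i)) * A_i0 lam c p i + A1_i1 lam c d p i + A2_i1 lam c p i)).
  { rewrite <- (is_RInt_unique _ _ _ _ (is_RInt_fcd_num_dh_at0 lam c d p i Hip)).
    rewrite (is_RInt_unique _ _ _ _ (is_RInt_ep_eval lam _ Hlam (ep_deg_pos_dh _ Hdeg))).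
    field. lra. }
  rewrite ep_coef1_dh, fcd_num_jump, Hdh by exact Hip.
  rewrite <- (B_i0_eq_coef0 lam c d p i) by auto.
  unfold B_i1, B_i0, A3_i1. rewrite (minus_INR p i Hip). field.
Qed.

(** * The sum of [fcd] in closed form *)

Definition qpoch (h : R) (n : nat) : R := prodR n (fun k => 1 - exp (- h * INR k)).

Definition geom_factor (k : nat) (h : R) : R := INR k * scaled_geom (INR k) h.

Lemma qpoch_pos h n : 0 < h -> 0 < qpoch h n.
Proof.
  intros Hh. induction n; cbn [qpoch prodR]; [lra|]. apply Rmult_lt_0_compat; auto.
  replace (- h * INR (S n)) with (- (h * INR (S n))) by ring.
  apply one_sub_exp_opp_pos, Rmult_lt_0_compat, lt_0_INR; auto; lia.
Qed.

Lemma prodR_geom_factor_qpoch n h : 0 < h ->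
  prodR n (fun k => geom_factor k h) * qpoch h n = INR (fact n) * h ^ n.
Proof.
  intros Hh. unfold qpoch. induction n as [|n IH]; [simpl; ring|].
  pose proof (one_sub_exp_opp_pos (h * INR (S n))
                ltac:(apply Rmult_lt_0_compat, lt_0_INR; auto; lia)).
  cbn [prodR].
  transitivity (prodR n (fun k => geom_factor k h) * prodR n (fun k => 1 - exp (- h * INR k))
                * (geom_factor (S n) h * (1 - exp (- h * INR (S n))))); [ring|].
  rewrite IH. unfold geom_factor, scaled_geom.
  replace (- h * INR (S n)) with (- (h * INR (S n))) by ring.
  replace (fact (S n)) with (S n * fact n)%nat by reflexivity.
  rewrite mult_INR. simpl pow. field. lra.
Qed.

Lemma expands_to_geom_factor k : (1 <= k)%nat -> expands_to (geom_factor k) 1 (INR k / 2).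
Proof.
  intros Hk. assert (0 < INR k) by (apply lt_0_INR; lia).
  eapply expands_to_eq;
    [apply expands_to_mult; [apply (expands_to_const (INR k))|apply (expands_to_scaled_geom _ H)]
    | field | field]; lra.
Qed.

Lemma fcd_eval lam c d p i N j : (1 <= N)%nat ->
  let h := lam / INR N in
  fcd lam c d p i N (INR j) =
  ep_eval (fcd_num lam c d p i) (exp (- h * INR j)) h / (qpoch h i * qpoch h (p - i)).
Proof.
  intros HN h. assert (HN' : INR N <> 0) by (apply not_0_INR; lia).
  unfold fcd, qbinom, qpoch. cbv zeta. rewrite !prodR_div, ep_eval_fcd_num.
  replace (exp (- lam / INR N)) with (exp (- h)) by (unfold h; f_equal; field; auto).
  rewrite (prodR_ext i (fun k => 1 - rpow (exp (- h)) (c * INR N + INR d + INR j - INR i + INR k))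
     (fun k => 1 - exp (- lam * c) * exp (- h * INR j) * exp (- h * (INR d - INR i + INR k))))
    by (intros k; rewrite rpow_exp_opp, <- !exp_plus; f_equal; f_equal; unfold h; field; auto).
  rewrite (prodR_ext (p - i)
     (fun k => 1 - rpow (exp (- h)) (INR (p - i) + INR j - INR (p - i) + INR k))
     (fun k => 1 - exp (- h * INR j) * exp (- h * INR k)))
    by (intros k; rewrite rpow_exp_opp, <- !exp_plus; f_equal; f_equal; ring).
  rewrite !(prodR_ext _ (fun k => 1 - rpow (exp (- h)) (INR k)) (fun k => 1 - exp (- h * INR k)))
    by (intros k; rewrite rpow_exp_opp; auto).
  rewrite rpow_exp_opp, pow_exp.
  replace (exp (- h * ((c * INR N + INR d) * INR (p - i) + INR p * INR j))) with
    (exp (- lam * (c * INR (p - i))) * exp (INR p * (- h * INR j))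
     * exp (- h * (INR d * INR (p - i))))
    by (rewrite <- !exp_plus; f_equal; unfold h; field; auto).
  unfold Rdiv. rewrite Rinv_mult. ring.
Qed.

Definition fcd_sum_profile (lam c : R) (d p i : nat) (h : R) : R :=
  ep_geom lam (fcd_num lam c d p i) h
  * (prodR i (fun k => geom_factor k h) * prodR (p - i) (fun k => geom_factor k h)).

Lemma sumR_fcd lam c d p i N : 0 < lam -> (1 <= p)%nat -> (i <= p)%nat -> (1 <= N)%nat ->
  sumR N (fun j => fcd lam c d p i N (INR j)) =
  (INR N / lam) ^ (p + 1) / (INR (fact i) * INR (fact (p - i)))
  * fcd_sum_profile lam c d p i (lam / INR N).
Proof.
  intros Hlam Hp Hip HN.
  assert (HNr : 0 < INR N) by (apply lt_0_INR; lia).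
  set (h := lam / INR N).
  assert (Hh : 0 < h) by (apply Rdiv_lt_0_compat; auto).
  rewrite (sumR_ext N _ (fun j => / (qpoch h i * qpoch h (p - i))
                                  * ep_eval (fcd_num lam c d p i) (exp (- h * INR j)) h))
    by (intros j; rewrite fcd_eval by auto; unfold Rdiv; apply Rmult_comm).
  rewrite sumR_scal. unfold fcd_sum_profile.
  rewrite <- (ep_sum_eval lam _ h N Hh ltac:(unfold h; field; lra)
                         (fcd_num_deg_pos lam c d p i Hp)).
  replace (INR N / lam) with (/ h) by (unfold h; field; lra).
  pose proof (prodR_geom_factor_qpoch i h Hh). pose proof (prodR_geom_factor_qpoch (p - i) h Hh).
  pose proof (qpoch_pos h i Hh). pose proof (qpoch_pos h (p - i) Hh).
  pose proof (fact_neq_0 i). pose proof (fact_neq_0 (p - i)).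
  pose proof (pow_nonzero h i ltac:(lra)). pose proof (pow_nonzero h (p - i) ltac:(lra)).
  replace (p + 1)%nat with (i + (p - i) + 1)%nat by lia.
  rewrite pow_inv, !pow_add, pow_1.
  replace (prodR i (fun k => geom_factor k h)) with (INR (fact i) * h ^ i / qpoch h i)
    by (field_simplify_eq; lra).
  replace (prodR (p - i) (fun k => geom_factor k h)) with
    (INR (fact (p - i)) * h ^ (p - i) / qpoch h (p - i)) by (field_simplify_eq; lra).
  field. repeat split; try lra; apply not_0_INR; auto.
Qed.

Lemma expands_to_fcd_sum_profile lam c d p i : 0 < lam -> (1 <= p)%nat -> (i <= p)%nat ->
  expands_to (fcd_sum_profile lam c d p i) (B_i0 lam c p i) (B_i1 lam c d p i).
Proof.
  intros Hlam Hp Hip.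
  assert (Hprod : forall n, expands_to (fun h => prodR n (fun k => geom_factor k h))
                                       1 (INR n * (INR n + 1) / 4)).
  { intros n. eapply expands_to_eq; [apply expands_to_prodR, expands_to_geom_factor| |]; auto.
    rewrite (sumR_ext n _ (fun k => 0 + / 2 * INR (S k))) by (intros; field).
    rewrite sumR_affine. field. }
  eapply expands_to_eq; [apply expands_to_mult;
    [apply expands_to_ep_geom, fcd_num_deg_pos; auto|apply expands_to_mult; apply Hprod]| |].
  - rewrite (B_i0_eq_coef0 lam c d p i) by auto. ring.
  - rewrite (B_i1_eq_coef lam c d p i) by auto. ring.
Qed.

Theorem lemma2p9 (c lam : R) (d p i : nat) :
  0 <= c -> 0 < lam -> (1 <= p)%nat -> (i <= p)%nat ->
  exists C : R, exists N0 : nat, forall N : nat, (N0 <= N)%nat ->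
    let K := (INR N / lam) ^ (p + 1) / (INR (fact i) * INR (fact (p - i))) in
    Rabs (sumR N (fun j => fcd lam c d p i N (INR j))
          - K * (B_i0 lam c p i + B_i1 lam c d p i * (lam / INR N)))
    <= K * (C / INR N ^ 2).
Proof.
  intros _ Hlam Hp Hip.
  destruct (expands_to_at_inv_nat _ _ _ lam Hlam
              (expands_to_fcd_sum_profile lam c d p i Hlam Hp Hip)) as [C [N0 [HN0 HC]]].
  exists C, N0. intros N HN K.
  assert (HK : 0 <= K).
  { apply Rle_mult_inv_pos.
    - apply pow_le, Rlt_le, Rdiv_lt_0_compat; auto. apply lt_0_INR. lia.
    - apply Rmult_lt_0_compat; apply lt_0_INR, lt_O_fact. }
  rewrite sumR_fcd by (auto; lia). fold K.
  set (h := lam / INR N) in *. set (Phi := fcd_sum_profile lam c d p i h) in *.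
  replace (K * Phi - K * (B_i0 lam c p i + B_i1 lam c d p i * h))
    with (K * (Phi - B_i0 lam c p i - B_i1 lam c d p i * h)) by ring.
  rewrite Rabs_mult, (Rabs_right K) by lra.
  apply Rmult_le_compat_l; [exact HK|exact (HC N HN)].
Qed.
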